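(* Let $d\ge 3$ and let $\mathfrak M$ be a model of $\mathsf{SpecRel}_d$. Let $m,k\in\mathrm{IOb}$ and $e_1,e_2\in Ev_k$ with $k\in e_1\cap e_2$ and $\mathsf{dist}_m(e_1,e_2)\neq 0$. Then $\mathsf{time}_m(e_1,e_2)>\mathsf{time}_k(e_1,e_2)$.
   Context: Fix a natural number $d\ge 2$. Models are first-order structures $\mathfrak M=\langle U;\mathrm B,\mathrm{Ob},\mathrm{IOb},\mathrm{Ph},\mathrm Q,+,\cdot,\le,\mathrm W\rangle$, where $\mathrm B,\mathrm{Ob},\mathrm{IOb},\mathrm{Ph},\mathrm Q$ are unary relations (subsets of $U$: bodies, observers, inertial observers, photons, quantities), $+,\cdot$ are binary function symbols, $\le$ a binary relation symbol, and $\mathrm W$ a $(2+d)$-ary relation; $\mathrm W(m,b,\vec p)$ is read ''observer $m$ coordinatizes body $b$ at coordinate point $\vec p\in\mathrm Q^d$''. For $\vec p=\langle p_1,\dots,p_d\rangle\in\mathrm Q^d$ write $p_t:=p_1$ (time component), $\vec p_s:=\langle p_2,\dots,p_d\rangle$ (space component), $|\vec p|:=\sqrt{p_1^2+\dots+p_n^2}$ for $\vec p\in \mathrm Q^n$ (Euclidean length); $\mathrm Q^d$ carries its vector-space operations and $\vec o$ is the origin. Define $ev_m(\vec p):=\{b\in\mathrm B:\mathrm W(m,b,\vec p)\}$, $Cd_m:=\{\vec p\in\mathrm Q^d: ev_m(\vec p)\neq\emptyset\}$, $Ev_m:=\{ev_m(\vec p):\vec p\in Cd_m\}$, $Ev:=\bigcup_{m\in\mathrm{Ob}}Ev_m$.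 $Crd_m(e)$ denotes the unique $\vec p\in Cd_m$ with $ev_m(\vec p)=e$; any statement involving $Crd_m(e)$ (or the notions below built from it) tacitly asserts that such a unique $\vec p$ exists. $\mathsf{time}_m(e_1,e_2):=|Crd_m(e_1)_t-Crd_m(e_2)_t|$, $\mathsf{dist}_m(e_1,e_2):=|Crd_m(e_1)_s-Crd_m(e_2)_s|$, and $e_1\sim_m e_2$ (simultaneous for $m$) iff $Crd_m(e_1)_t=Crd_m(e_2)_t$. $\mathsf{SpecRel}_d$ consists of the axioms: AxFrame: $\mathrm{Ob}\cup\mathrm{Ph}\subseteq\mathrm B$, $\mathrm{IOb}\subseteq\mathrm{Ob}$, $U=\mathrm B\cup\mathrm Q$, $\mathrm B\cap\mathrm Q=\emptyset$, $\mathrm W\subseteq\mathrm{Ob}\times\mathrm B\times\mathrm Q^d$, $+,\cdot$ are binary operations on $\mathrm Q$ and $\le$ is a binary relation on $\mathrm Q$. AxEOF: $\langle\mathrm Q;+,\cdot,\le\rangle$ is a Euclidean ordered field (a linearly ordered field in which every positive element has a square root). AxSelf$^-$: $\forall m\in\mathrm{Ob}\ \forall\vec p\in Cd_m\ (m\in ev_m(\vec p)\iff \vec p_s=\vec o)$. AxPh$_0$: $\forall m\in\mathrm{IOb}\ \forall\vec p,\vec q\in\mathrm Q^d\ (|\vec p_s-\vec q_s|=|p_t-q_t|\iff \mathrm{Ph}\cap ev_m(\vec p)\cap ev_m(\vec q)\neq\emptyset)$. AxEv: $\forall m,k\in\mathrm{IOb}\ Ev_m=Ev_k$. AxSimDist: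 $\forall m,k\in\mathrm{IOb}\ \forall e_1,e_2\in Ev_m\ (e_1\sim_m e_2\wedge e_1\sim_k e_2\Rightarrow \mathsf{dist}_m(e_1,e_2)=\mathsf{dist}_k(e_1,e_2))$. *)

(* Models of SpecRel_d, with d = n.+1 (n = number of spatial dims). *)
From mathcomp Require Import all_boot all_order all_algebra.
From Stdlib Require Import ClassicalEpsilon.
Set Implicit Arguments. Unset Strict Implicit. Unset Printing Implicit Defensive.
Import Order.TTheory GRing.Theory Num.Theory.
Local Open Scope ring_scope.

Section SpecRel.
Variable R : realFieldType.
Variable n : nat.

Definition point := 'rV[R]_(n.+1).

Definition tcomp (p : point) : R := p ord0 ord0.
Definition scomp (p : point) : 'rV[R]_n := \row_(i < n) p ord0 (lift ord0 i).

(* square root (meaningful in a Euclidean ordered field: the nonnegative root) *)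
Definition esqrt (x : R) : R :=
  epsilon (inhabits 0) (fun y : R => 0 <= y /\ y * y = x).

Definition elen k (v : 'rV[R]_k) : R := esqrt (\sum_(i < k) (v ord0 i) ^+ 2).

Definition Euclidean : Prop := forall x : R, 0 < x -> exists y : R, y * y = x.

Variable B : Type.
Variables Ob IOb Ph : B -> Prop.
Variable W : B -> B -> point -> Prop.

Definition ev (m : B) (p : point) : B -> Prop := fun b => W m b p.
Definition Cd (m : B) (p : point) : Prop := exists b, W m b p.
Definition inEv (m : B) (e : B -> Prop) : Prop := exists p, Cd m p /\ ev m p = e.
Definition inEvAll (e : B -> Prop) : Prop := exists m, Ob m /\ inEv m e.

(* IsCrd m e p : p is the unique point of Cd_m with ev_m(p) = e, i.e. Crd_m(e) = p *)
Definition IsCrd (m : B) (e : B -> Prop) (p : point) : Prop :=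
  Cd m p /\ ev m p = e /\ forall q, Cd m q -> ev m q = e -> q = p.

Definition tdiff (p q : point) : R := `|tcomp p - tcomp q|.
Definition sdist (p q : point) : R := elen (scomp p - scomp q).

Definition AxFrame : Prop :=
  (forall m, IOb m -> Ob m) /\ (forall m b p, W m b p -> Ob m).

Definition AxEOF : Prop := Euclidean.

Definition AxSelf : Prop :=
  forall m, Ob m -> forall p, Cd m p -> (W m m p <-> scomp p = 0).

Definition AxPh0 : Prop :=
  forall m, IOb m -> forall p q : point,
    (elen (scomp p - scomp q) = `|tcomp p - tcomp q| <->
     exists b, Ph b /\ W m b p /\ W m b q).

Definition AxEv : Prop :=
  forall m k, IOb m -> IOb k -> forall e, inEv m e <-> inEv k e.

Definition AxSimDist : Prop :=
  forall m k, IOb m -> IOb k -> forall e1 e2, inEv m e1 -> inEv m e2 ->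
  forall p1 p2 q1 q2,
    IsCrd m e1 p1 -> IsCrd m e2 p2 -> IsCrd k e1 q1 -> IsCrd k e2 q2 ->
    tcomp p1 = tcomp p2 -> tcomp q1 = tcomp q2 ->
    sdist p1 p2 = sdist q1 q2.

Definition SpecRel : Prop :=
  AxFrame /\ AxEOF /\ AxSelf /\ AxPh0 /\ AxEv /\ AxSimDist.

End SpecRel.

(* The worldview transformation [w] from [k]- to [m]-coordinates is a bijection preserving lightlike
   separation (AxPh0, AxEv), hence it maps light lines onto light lines.  For events [q1], [q2] on the
   time axis of [k] that are not lightlike separated, this forces [w] to commute with the point
   reflection [x |-> q1 + q2 - x] on the events lightlike to both [q1] and [q2]; these form a sphere of
   diameter [T = time_k] at the middle time, and their images are the events lightlike to both [w q1]
   and [w q2].  Comparing the simultaneous distances of two reflected events (AxSimDist) gives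
   [T^2 = tau^2 - D^2] with [tau = time_m] and [D = dist_m].  The spacelike case [tau < D] is excluded
   because the image of the sphere would then contain simultaneous events farther apart than [T]. *)

From mathcomp Require Import all_boot all_order all_algebra.
From mathcomp Require Import ring lra.
From Stdlib Require Import ClassicalEpsilon Classical.
Set Implicit Arguments. Unset Strict Implicit. Unset Printing Implicit Defensive.
Import Order.TTheory GRing.Theory Num.Theory.
Local Open Scope ring_scope.

Ltac row_ring := apply/rowP => ?; rewrite !mxE; ring.

Lemma row_entry (T : Type) k (u v : 'rV[T]_k) j : u = v -> u ord0 j = v ord0 j.
Proof. by move=> ->. Qed.

Section Dot.
Variables (R : realFieldType) (k : nat).
Implicit Types (x : R) (a b c : 'rV[R]_k).

Definition dot a b : R := \sum_(i < k) a ord0 i * b ord0 i.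

Lemma dotC a b : dot a b = dot b a.
Proof. by apply: eq_bigr => i _; rewrite mulrC. Qed.

Lemma dotDl a b c : dot (a + b) c = dot a c + dot b c.
Proof. by rewrite /dot -big_split; apply: eq_bigr => i _; rewrite !mxE mulrDl. Qed.

Lemma dotNl a c : dot (- a) c = - dot a c.
Proof. by rewrite /dot -sumrN; apply: eq_bigr => i _; rewrite !mxE mulNr. Qed.

Lemma dotZl x a c : dot (x *: a) c = x * dot a c.
Proof. by rewrite /dot mulr_sumr; apply: eq_bigr => i _; rewrite !mxE mulrA. Qed.

Lemma dotDr a b c : dot c (a + b) = dot c a + dot c b.
Proof. by rewrite !(dotC c) dotDl. Qed.

Lemma dotNr a c : dot c (- a) = - dot c a.
Proof. by rewrite !(dotC c) dotNl. Qed.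

Lemma dotZr x a c : dot c (x *: a) = x * dot c a.
Proof. by rewrite !(dotC c) dotZl. Qed.

Definition dotE := (dotDl, dotNl, dotZl, dotDr, dotNr, dotZr).

Lemma dot0r a : dot a 0 = 0.
Proof. by rewrite /dot big1 // => i _; rewrite mxE mulr0. Qed.

Lemma dot_delta i a : dot (delta_mx 0 i) a = a ord0 i.
Proof.
rewrite /dot (bigD1 i) //= mxE !eqxx mul1r big1 ?addr0 // => j /negbTE ji.
by rewrite mxE ji andbF mul0r.
Qed.

Lemma dotr_delta i a : dot a (delta_mx 0 i) = a ord0 i.
Proof. by rewrite dotC dot_delta. Qed.

Lemma dot_self_ge0 a : 0 <= dot a a.
Proof. by apply: sumr_ge0 => i _; rewrite -expr2 sqr_ge0. Qed.

Lemma dot_self_eq0 a : dot a a = 0 -> a = 0.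
Proof.
move=> /eqP; rewrite psumr_eq0 => [/allP a0|i _]; last by rewrite -expr2 sqr_ge0.
apply/rowP => i; have := a0 i (mem_index_enum i).
by rewrite mxE -expr2 sqrf_eq0 => /eqP.
Qed.

Lemma dot_sub_self_le a b : dot (a - b) (a - b) <= 2 * dot a a + 2 * dot b b.
Proof.
have := dot_self_ge0 (a + b); rewrite !dotE (dotC b a); lra.
Qed.

Lemma dot_orthogonal_comb x1 x2 a b : dot a b = 0 ->
  dot (x1 *: a + x2 *: b) (x1 *: a + x2 *: b) = x1 ^+ 2 * dot a a + x2 ^+ 2 * dot b b.
Proof. by move=> ab; rewrite !dotE (dotC b) ab; ring. Qed.

End Dot.

Section Minkowski.
Variables (R : realFieldType) (n : nat).
Implicit Types (x t : R) (p q r u v w z : point R n) (s : 'rV[R]_n).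

Lemma tcompD p q : tcomp (p + q) = tcomp p + tcomp q.
Proof. by rewrite /tcomp mxE. Qed.
Lemma tcompN p : tcomp (- p) = - tcomp p.
Proof. by rewrite /tcomp mxE. Qed.
Lemma tcompZ x p : tcomp (x *: p) = x * tcomp p.
Proof. by rewrite /tcomp mxE. Qed.
Lemma scompD p q : scomp (p + q) = scomp p + scomp q.
Proof. by apply/rowP => i; rewrite !mxE. Qed.
Lemma scompN p : scomp (- p) = - scomp p.
Proof. by apply/rowP => i; rewrite !mxE. Qed.
Lemma scompZ x p : scomp (x *: p) = x *: scomp p.
Proof. by apply/rowP => i; rewrite !mxE. Qed.

Definition compE := (tcompD, tcompN, tcompZ, scompD, scompN, scompZ).

Lemma point_eq0 p : tcomp p = 0 -> scomp p = 0 -> p = 0.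
Proof.
move=> t0 s0; apply/rowP => j; rewrite mxE.
case: (unliftP ord0 j) => [i ->|-> //].
by have := row_entry i s0; rewrite !mxE.
Qed.

Definition mkpt t s : point R n :=
  \row_(j < n.+1) if unlift ord0 j is Some i then s ord0 i else t.

Lemma tcomp_mk t s : tcomp (mkpt t s) = t.
Proof. by rewrite /tcomp mxE unlift_none. Qed.
Lemma scomp_mk t s : scomp (mkpt t s) = s.
Proof. by apply/rowP => i; rewrite !mxE liftK. Qed.

Lemma mkpt_comp p : mkpt (tcomp p) (scomp p) = p.
Proof.
apply/eqP; rewrite -subr_eq0; apply/eqP.
by apply: point_eq0; rewrite !compE (tcomp_mk, scomp_mk) subrr.
Qed.

Lemma mkptB t t' s s' : mkpt t s - mkpt t' s' = mkpt (t - t') (s - s').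
Proof. by rewrite -[LHS]mkpt_comp !compE !tcomp_mk !scomp_mk. Qed.

Definition mink p q : R := tcomp p * tcomp q - dot (scomp p) (scomp q).

Lemma minkC p q : mink p q = mink q p.
Proof. by rewrite /mink mulrC dotC. Qed.
Lemma minkDl p q r : mink (p + q) r = mink p r + mink q r.
Proof. rewrite /mink tcompD scompD dotDl; ring. Qed.
Lemma minkNl p r : mink (- p) r = - mink p r.
Proof. rewrite /mink tcompN scompN dotNl; ring. Qed.
Lemma minkZl x p r : mink (x *: p) r = x * mink p r.
Proof. rewrite /mink tcompZ scompZ dotZl; ring. Qed.
Lemma minkDr p q r : mink r (p + q) = mink r p + mink r q.
Proof. by rewrite !(minkC r) minkDl. Qed.
Lemma minkNr p r : mink r (- p) = - mink r p.
Proof. by rewrite !(minkC r) minkNl. Qed.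
Lemma minkZr x p r : mink r (x *: p) = x * mink r p.
Proof. by rewrite !(minkC r) minkZl. Qed.

Definition minkE := (minkDl, minkNl, minkZl, minkDr, minkNr, minkZr).

Lemma mink_self p : mink p p = tcomp p ^+ 2 - dot (scomp p) (scomp p).
Proof. by rewrite /mink expr2. Qed.

Lemma mink_null_scale x u : mink u u = 0 -> mink (x *: u) (x *: u) = 0.
Proof. by move=> u0; rewrite minkZl minkZr u0 !mulr0. Qed.

Lemma mink_null_shift t v w :
  mink v v = 0 -> mink w v = 0 -> mink (w - t *: v) (w - t *: v) = mink w w.
Proof. by move=> v0 wv; rewrite !minkE v0 (minkC v w) wv; ring. Qed.

Definition lightlike p q : Prop := mink (p - q) (p - q) = 0.

Lemma lightlike_sym p q : lightlike p q -> lightlike q p.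
Proof. by rewrite /lightlike -opprB minkNl minkNr opprK. Qed.

Lemma lightlike_refl p : lightlike p p.
Proof. by rewrite /lightlike !minkE; ring. Qed.

Lemma lightlike_translate p u v : lightlike (p + u) (p + v) <-> lightlike u v.
Proof. by rewrite /lightlike (_ : p + u - (p + v) = u - v) //; row_ring. Qed.

Lemma null_orthogonal_parallel u v :
  mink u u = 0 -> mink v v = 0 -> mink u v = 0 -> u != 0 ->
  v = (tcomp v / tcomp u) *: u.
Proof.
move=> u0 v0 uv nu.
have tu : tcomp u != 0.
  apply: contra nu => /eqP t0; apply/eqP; apply: point_eq0 => //.
  by apply: dot_self_eq0; move: u0; rewrite mink_self t0; lra.
pose r := tcomp u *: v - tcomp v *: u.
have tr : tcomp r = 0 by rewrite /r !compE; ring.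
have rr : mink r r = 0 by rewrite /r !minkE u0 v0 (minkC v) uv; ring.
have r0 : r = 0.
  apply: point_eq0 => //; apply: dot_self_eq0.
  by move: rr; rewrite mink_self tr; lra.
move/eqP: r0; rewrite subr_eq0 => /eqP ruv; apply: (scalerI tu).
by rewrite ruv scalerA mulrCA mulfV // mulr1.
Qed.

Lemma lightlike_line a b z :
  lightlike b a -> b != a -> lightlike z a -> lightlike z b ->
  exists c, z = a + c *: (b - a).
Proof.
rewrite /lightlike => ba nba za zb.
have zb' : mink ((z - a) - (b - a)) ((z - a) - (b - a)) = 0.
  by rewrite (_ : z - a - (b - a) = z - b) //; row_ring.
have orth : mink (b - a) (z - a) = 0.
  move: zb' za ba; move: (z - a) (b - a) => d e; rewrite !minkE => h dd ee.
  by move: h; rewrite dd ee (minkC d e); lra.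
have nu : b - a != 0 by rewrite subr_eq0.
exists (tcomp (z - a) / tcomp (b - a)).
by rewrite -(null_orthogonal_parallel ba za orth nu); row_ring.
Qed.

Lemma lightlike_on_line a b c :
  lightlike b a -> lightlike (a + c *: (b - a)) a /\ lightlike (a + c *: (b - a)) b.
Proof.
rewrite /lightlike => ba; split.
  by rewrite (_ : _ - a = c *: (b - a)) ?mink_null_scale //; row_ring.
by rewrite (_ : _ - b = (c - 1) *: (b - a)) ?mink_null_scale //; row_ring.
Qed.

(* With [u = X - p1], [v = Y - p2], [w = p2 - p1]: if [p1 X] is parallel to [p2 Y] and [p2 X] to
   [p1 Y], then [p1 X p2 Y] is a parallelogram, provided [p1 X] is null and [w] is not. *)
Lemma parallelogram_null_side u v w a b :
  u != 0 -> mink u u = 0 -> mink w w != 0 ->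
  v = a *: u -> u - w = b *: (v + w) -> v = - u.
Proof.
move=> nu u0 nw -> e.
have uw : (1 - b * a) *: u = (1 + b) *: w.
  apply/rowP => j; have := row_entry j e; rewrite !mxE; lra.
have b1 : 1 + b = 0.
  apply: contraNeq nw => nb; apply/eqP.
  rewrite -[w]scale1r -(mulVf nb) -scalerA -uw scalerA.
  exact: mink_null_scale.
have ab : 1 - b * a = 0.
  by move: uw; rewrite b1 scale0r => /eqP; rewrite scaler_eq0 (negbTE nu) orbF => /eqP.
have -> : a = -1 by move: ab; rewrite (_ : b = -1); [lra | move: b1; lra].
by rewrite scaleN1r.
Qed.

End Minkowski.

Section SpatialDirections.
Variables (R : realFieldType) (n : nat).

Lemma exists_orthogonal (v : 'rV[R]_n) : (2 <= n)%N ->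
  exists w, dot v w = 0 /\ 0 < dot w w.
Proof.
move=> n2; have n1 : (0 < n)%N by apply: leq_trans n2.
pose i0 := Ordinal n1; pose i1 := Ordinal n2.
have ne : i1 != i0 by [].
pose v0 := v ord0 i0; pose v1 := v ord0 i1.
have [v01|nv01] := eqVneq (v0 ^+ 2 + v1 ^+ 2) 0.
  exists (delta_mx 0 i0); rewrite dotr_delta dot_delta mxE !eqxx; split=> //.
  by move: v01; rewrite /v0 !expr2; have := sqr_ge0 v0; have := sqr_ge0 v1; nra.
exists ((- v1) *: delta_mx 0 i0 + v0 *: delta_mx 0 i1).
rewrite !dotE !dot_delta !dotr_delta !mxE !eqxx (negbTE ne) eq_sym (negbTE ne) /=.
split; first by rewrite -/v0 -/v1; ring.
rewrite -/v0 -/v1; have := sqr_ge0 v0; have := sqr_ge0 v1.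
move: nv01; rewrite !expr2 => nv01 h0 h1.
have : 0 < v0 * v0 + v1 * v1 by rewrite lt0r nv01 addr_ge0.
nra.
Qed.

Lemma lightlike_separates (p q : point R n) : (1 <= n)%N -> p != q ->
  exists r, lightlike p r /\ ~ lightlike q r.
Proof.
move=> n1 npq; pose e := delta_mx 0 (Ordinal n1) : 'rV[R]_n.
have ee : dot e e = 1 by rewrite dot_delta mxE !eqxx.
pose d := p - q; have dpq : p - q = d by []; clearbody d.
have null_dir (c x : R) : mink (mkpt c (x *: e)) (mkpt c (x *: e)) = c ^+ 2 - x ^+ 2.
  by rewrite mink_self tcomp_mk scomp_mk !dotE ee; ring.
apply: NNPP => no_r.
have cone (c x : R) : x ^+ 2 = 1 ->
    mink d d + 2 * c * mink d (mkpt 1 (x *: e)) = 0.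
  move=> x2; have : lightlike q (p + c *: mkpt 1 (x *: e)).
    apply: NNPP => nq; apply: no_r; exists (p + c *: mkpt 1 (x *: e)); split=> //.
    rewrite /lightlike (_ : _ - _ = (- c) *: mkpt 1 (x *: e)); last by row_ring.
    by apply: mink_null_scale; rewrite null_dir x2; ring.
  rewrite /lightlike (_ : _ - _ = - (d + c *: mkpt 1 (x *: e))); last by rewrite -dpq; row_ring.
  by rewrite minkNl minkNr opprK !minkE null_dir x2 (minkC _ d) => <-; ring.
have dx (x : R) : mink d (mkpt 1 (x *: e)) = tcomp d - x * scomp d ord0 (Ordinal n1).
  by rewrite /mink tcomp_mk scomp_mk dotZr dotC dot_delta mulr1.
have := cone 1 1 (expr1n _ _); have := cone 2 1 (expr1n _ _).
have m1 : (-1 : R) ^+ 2 = 1 by rewrite sqrrN expr1n.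
have := cone 1 (-1) m1.
rewrite !dx => k3 k2 k1.
have td : tcomp d = 0 by lra.
have dd : mink d d = 0 by lra.
move/negP: npq; apply; rewrite -subr_eq0 dpq; apply/eqP; apply: (point_eq0 td).
by apply: dot_self_eq0; move: dd; rewrite mink_self td; lra.
Qed.

End SpatialDirections.

Section EuclideanLength.
Variables (R : realFieldType) (n : nat).
Hypothesis euclR : Euclidean R.

Lemma euclidean_sqrt (x : R) : 0 <= x -> exists y, 0 <= y /\ y * y = x.
Proof.
rewrite le0r => /orP[/eqP ->|x0]; first by exists 0; rewrite mul0r.
have [y yy] := euclR x0; exists `|y|; split=> //.
by rewrite -normrM yy ger0_norm // ltW.
Qed.

Lemma esqrtP (x : R) : 0 <= x -> 0 <= esqrt x /\ esqrt x * esqrt x = x.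
Proof.
move=> x0; apply: (epsilon_spec (inhabits 0) (fun y : R => 0 <= y /\ y * y = x)).
exact: euclidean_sqrt.
Qed.

Lemma elen_dot k (v : 'rV[R]_k) : elen v = esqrt (dot v v).
Proof. by rewrite /elen /dot; congr esqrt; apply: eq_bigr => i _; rewrite expr2. Qed.

Lemma sdistP (p q : point R n) :
  0 <= sdist p q /\ sdist p q * sdist p q = dot (scomp (p - q)) (scomp (p - q)).
Proof. by rewrite /sdist elen_dot -scompN -scompD; exact: esqrtP (dot_self_ge0 _). Qed.

Lemma sdist_neq0 (p q : point R n) :
  sdist p q != 0 -> 0 < dot (scomp (q - p)) (scomp (q - p)).
Proof.
have [s0 ss] := sdistP p q; rewrite -opprB scompN dotNl dotNr opprK -ss => ns.
by rewrite lt0r mulf_neq0 // mulr_ge0.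
Qed.

Lemma elen_lightlike (p q : point R n) :
  elen (scomp p - scomp q) = `|tcomp p - tcomp q| <-> lightlike p q.
Proof.
rewrite elen_dot /lightlike mink_self -scompN -scompD -tcompN -tcompD.
have [s0 ss] := esqrtP (dot_self_ge0 (scomp (p - q))).
move: s0 ss; set s := esqrt _; set d := dot _ _; set t := tcomp _ => s0 ss.
have tt : `|t| * `|t| = t ^+ 2 by rewrite -normrM -expr2 ger0_norm ?sqr_ge0.
split=> [st|]; first by rewrite -ss st tt subrr.
by have := normr_ge0 t; move: ss tt; nra.
Qed.

End EuclideanLength.

Section LightCones.
Variables (R : realFieldType) (n : nat).
Implicit Types (q x : point R n) (sv w : 'rV[R]_n) (tau s h : R).

Lemma light_cones_on_axis q1 q2 x :
  scomp q1 = 0 -> scomp q2 = 0 -> tcomp q1 != tcomp q2 ->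
  lightlike x q1 -> lightlike x q2 ->
  tcomp x = (tcomp q1 + tcomp q2) / 2 /\
  dot (scomp x) (scomp x) = ((tcomp q2 - tcomp q1) / 2) ^+ 2.
Proof.
rewrite /lightlike !mink_self !compE => -> -> q12; rewrite oppr0 addr0.
move=> xq1 xq2; have tx : tcomp x = (tcomp q1 + tcomp q2) / 2.
  have /eqP : (tcomp q2 - tcomp q1) * (2 * tcomp x - tcomp q1 - tcomp q2) = 0.
    by move: xq1 xq2; rewrite !expr2; lra.
  by rewrite mulf_eq0 subr_eq0 eq_sym (negbTE q12) /= => /eqP; lra.
by split=> //; move: xq1; rewrite tx !expr2; lra.
Qed.

(* The meet of the light cones of [0] and [mkpt tau sv] in the space spanned by the time axis, [sv]
   and [w] (orthogonal to [sv]): [s] shifts the time from [tau / 2], [h] is the [w]-coordinate. *)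
Definition cone_point sv w tau s h : point R n :=
  mkpt (tau / 2 + s) ((1 / 2 + tau * s / dot sv sv) *: sv + h *: w).

Lemma cone_point_lightlike sv w tau s h :
  dot sv w = 0 -> dot sv sv != 0 ->
  h ^+ 2 * dot w w = s ^+ 2 * (1 - tau ^+ 2 / dot sv sv) + (tau ^+ 2 - dot sv sv) / 4 ->
  lightlike (cone_point sv w tau s h) 0 /\
  lightlike (cone_point sv w tau s h) (mkpt tau sv).
Proof.
move=> svw D0 hh; rewrite /lightlike /cone_point subr0 mkptB !mink_self.
rewrite !tcomp_mk !scomp_mk; set a := 1 / 2 + _.
rewrite (_ : a *: sv + h *: w - sv = (a - 1) *: sv + h *: w); last by row_ring.
by rewrite !dot_orthogonal_comb // hh /a; split; field.
Qed.

Lemma cone_point_dist sv w tau s h h' :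
  dot (scomp (cone_point sv w tau s h - cone_point sv w tau s h'))
      (scomp (cone_point sv w tau s h - cone_point sv w tau s h')) =
  (h - h') ^+ 2 * dot w w.
Proof.
rewrite /cone_point mkptB scomp_mk.
rewrite (_ : _ + _ - _ = (h - h') *: w); last by row_ring.
by rewrite dotZl dotZr mulrA expr2.
Qed.

End LightCones.

Section LightConePreserving.
Variables (R : realFieldType) (n : nat) (f : point R n -> point R n).
Hypotheses (f_inj : injective f) (f_surj : forall p, exists z, f z = p).
Hypothesis f_lightlike : forall z z', lightlike (f z) (f z') <-> lightlike z z'.

Lemma light_line_image a b c : lightlike b a -> b != a ->
  exists c', f (a + c *: (b - a)) = f a + c' *: (f b - f a).
Proof.
move=> ba nba; have [za zb] := lightlike_on_line c ba.
by apply: lightlike_line; rewrite ?(inj_eq f_inj) //; apply/f_lightlike.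
Qed.

Lemma light_line_preimage a b c' : lightlike b a -> b != a ->
  exists c, f a + c' *: (f b - f a) = f (a + c *: (b - a)).
Proof.
move=> ba nba; have [z fz] := f_surj (f a + c' *: (f b - f a)).
have fba : lightlike (f b) (f a) by apply/f_lightlike.
have [] := lightlike_on_line c' fba; rewrite -fz => /f_lightlike za /f_lightlike zb.
by have [c ->] := lightlike_line ba nba za zb; exists c.
Qed.

(* [f] maps the parallel light lines through [q1, x] and [q2, q1 + q2 - x] to parallel lines:
   otherwise some event of the first image line would be lightlike to the whole second one,
   and its preimage would lie on both of the original lines. *)
Lemma reflection_parallel q1 q2 x :
  lightlike x q1 -> x != q1 -> lightlike x q2 -> ~ lightlike q1 q2 ->
  exists c, f (q1 + q2 - x) - f q2 = c *: (f x - f q1).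
Proof.
move=> xq1 nxq1 xq2 nq12; set y := q1 + q2 - x.
have yq2 : lightlike y q2.
  by rewrite /lightlike (_ : y - q2 = q1 - x); [exact: lightlike_sym | row_ring].
have nyq2 : y != q2.
  apply: contraNneq nxq1 => yq; apply/eqP/rowP => j.
  by have := row_entry j yq; rewrite /y !mxE; lra.
have u0 : mink (f x - f q1) (f x - f q1) = 0 by apply/f_lightlike.
have v0 : mink (f y - f q2) (f y - f q2) = 0 by apply/f_lightlike.
have nu : f x - f q1 != 0 by rewrite subr_eq0 (inj_eq f_inj).
have [uv0|uv] := eqVneq (mink (f x - f q1) (f y - f q2)) 0.
  by exists (tcomp (f y - f q2) / tcomp (f x - f q1)); apply: null_orthogonal_parallel.
pose s0 := mink (f q2 - f q1) (f y - f q2) / mink (f x - f q1) (f y - f q2).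
have [l fz] := light_line_preimage s0 xq1 nxq1.
set z := q1 + l *: (x - q1) in fz.
have [s' fK] := light_line_image (1 - l) yq2 nyq2.
have zq2v : mink (f z - f q2) (f y - f q2) = 0.
  rewrite -fz (_ : _ - f q2 = s0 *: (f x - f q1) - (f q2 - f q1)); last by row_ring.
  by rewrite minkDl minkNl minkZl /s0 mulfVK // subrr.
have zK : lightlike (f z) (f (q2 + (1 - l) *: (y - q2))).
  by apply/f_lightlike; rewrite /lightlike (_ : z - _ = x - q2) // /z /y; row_ring.
have zq2 : lightlike (f z) (f q2).
  move: zK; rewrite /lightlike fK.
  by rewrite (_ : _ - _ = (f z - f q2) - s' *: (f y - f q2)) ?mink_null_shift //; row_ring.
have zy : lightlike z y.
  apply/f_lightlike; rewrite /lightlike.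
  rewrite (_ : f z - f y = (f z - f q2) - 1 *: (f y - f q2)); last by row_ring.
  by rewrite mink_null_shift.
move/f_lightlike: zq2 => zq2.
have [mu ezy] := lightlike_line yq2 nyq2 zq2 zy.
case: nq12; rewrite /lightlike (_ : q1 - q2 = (- (l + mu)) *: (x - q1)).
  exact: mink_null_scale.
by apply/rowP => j; have := row_entry j ezy; rewrite /z /y !mxE; lra.
Qed.

Lemma reflection_through_midpoint q1 q2 x :
  lightlike x q1 -> lightlike x q2 -> x != q1 -> x != q2 -> ~ lightlike q1 q2 ->
  f (q1 + q2 - x) = f q1 + f q2 - f x.
Proof.
move=> xq1 xq2 nxq1 nxq2 nq12.
have [a ea] := reflection_parallel xq1 nxq1 xq2 nq12.
have yq1 : lightlike (q1 + q2 - x) q1.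
  by rewrite /lightlike (_ : _ - q1 = q2 - x); [exact: lightlike_sym | row_ring].
have yq2 : lightlike (q1 + q2 - x) q2.
  by rewrite /lightlike (_ : _ - q2 = q1 - x); [exact: lightlike_sym | row_ring].
have nyq1 : q1 + q2 - x != q1.
  apply: contraNneq nxq2 => yq; apply/eqP/rowP => j.
  by have := row_entry j yq; rewrite !mxE; lra.
have [b eb] := reflection_parallel yq1 nyq1 yq2 nq12.
rewrite (_ : q1 + q2 - (q1 + q2 - x) = x) in eb; last by row_ring.
have nu : f x - f q1 != 0 by rewrite subr_eq0 (inj_eq f_inj).
have u0 : mink (f x - f q1) (f x - f q1) = 0 by apply/f_lightlike.
have nw : mink (f q2 - f q1) (f q2 - f q1) != 0.
  by apply/eqP => w0; apply/nq12/lightlike_sym/f_lightlike.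
have vu : f (q1 + q2 - x) - f q2 = - (f x - f q1).
  apply: (parallelogram_null_side nu u0 nw ea (b := b)).
  by apply/rowP => j; have := row_entry j eb; rewrite !mxE; lra.
by apply/rowP => j; have := row_entry j vu; rewrite !mxE; lra.
Qed.

Hypotheses (n2 : (2 <= n)%N) (euclR : Euclidean R).
Hypothesis f_simdist : forall z z', tcomp z = tcomp z' -> tcomp (f z) = tcomp (f z') ->
  dot (scomp (f z - f z')) (scomp (f z - f z')) = dot (scomp (z - z')) (scomp (z - z')).

Section AxisInterval.
Variables q1 q2 : point R n.
Hypotheses (q1_axis : scomp q1 = 0) (q2_axis : scomp q2 = 0) (q12 : tcomp q1 != tcomp q2).

Let tau := tcomp (f q2 - f q1).
Let sv := scomp (f q2 - f q1).
Let T := tcomp q2 - tcomp q1.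

Lemma axis_not_lightlike : ~ lightlike q1 q2.
Proof.
rewrite /lightlike mink_self !compE q1_axis q2_axis oppr0 addr0 dot0r subr0.
by move/eqP; rewrite sqrf_eq0 subr_eq0 (negbTE q12).
Qed.

Lemma image_q2 : f q2 = f q1 + mkpt tau sv.
Proof. by rewrite mkpt_comp addrC subrK. Qed.

Lemma cone_point_image w s h : dot sv w = 0 -> dot sv sv != 0 ->
  h ^+ 2 * dot w w = s ^+ 2 * (1 - tau ^+ 2 / dot sv sv) + (tau ^+ 2 - dot sv sv) / 4 ->
  lightlike (f q1 + cone_point sv w tau s h) (f q1) /\
  lightlike (f q1 + cone_point sv w tau s h) (f q2).
Proof.
move=> svw D0 hh; have [c0 c1] := cone_point_lightlike svw D0 hh.
by rewrite image_q2 -{2}[f q1]addr0; split; apply/lightlike_translate.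
Qed.

Lemma preimage_cone_meet x : lightlike (f x) (f q1) -> lightlike (f x) (f q2) ->
  tcomp x = (tcomp q1 + tcomp q2) / 2 /\ dot (scomp x) (scomp x) = (T / 2) ^+ 2.
Proof. by move=> /f_lightlike xq1 /f_lightlike xq2; apply: light_cones_on_axis. Qed.

Lemma simdist_cone_points w s h h' x x' :
  f x = f q1 + cone_point sv w tau s h -> f x' = f q1 + cone_point sv w tau s h' ->
  tcomp x = tcomp x' ->
  dot (scomp (x - x')) (scomp (x - x')) = (h - h') ^+ 2 * dot w w.
Proof.
move=> fx fx' txx'; rewrite -f_simdist // ?fx ?fx'; last by rewrite !tcompD /cone_point !tcomp_mk.
by rewrite (_ : _ - _ = cone_point sv w tau s h - cone_point sv w tau s h') ?cone_point_dist //; row_ring.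
Qed.

(* In the spacelike case the two antipodal events [h] and [-h] of a large enough sphere in the meet of the
   light cones of [f q1] and [f q2] would be farther apart than the diameter [|T|] of its preimage. *)
Lemma image_not_spacelike : dot sv sv <= tau ^+ 2.
Proof.
rewrite leNgt; apply/negP => spacelike; set D := dot sv sv in spacelike.
have D0 : 0 < D by apply: le_lt_trans spacelike; exact: sqr_ge0.
have [w [svw w0]] := exists_orthogonal sv n2.
have Dt : 0 < D - tau ^+ 2 by rewrite subr_gt0.
have s0 : 0 <= D * (T ^+ 2 + D) / (D - tau ^+ 2).
  exact: divr_ge0 (mulr_ge0 (ltW D0) (addr_ge0 (sqr_ge0 _) (ltW D0))) (ltW Dt).
have [s [_ ss]] := euclidean_sqrt euclR s0.
pose H := T ^+ 2 + D - (D - tau ^+ 2) / 4.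
have HE : s ^+ 2 * (1 - tau ^+ 2 / D) + (tau ^+ 2 - D) / 4 = H.
  by rewrite expr2 ss /H; field; rewrite ?(lt0r_neq0 D0) ?(lt0r_neq0 Dt).
have H0 : 0 <= H / dot w w.
  by apply: divr_ge0 (ltW w0); rewrite /H; have := sqr_ge0 T; have := sqr_ge0 tau; lra.
have [h [_ hh]] := euclidean_sqrt euclR H0.
have hH (h' : R) : h' ^+ 2 = h ^+ 2 -> h' ^+ 2 * dot w w = H.
  by move=> ->; rewrite expr2 hh mulfVK // lt0r_neq0.
have [x1 fx1] := f_surj (f q1 + cone_point sv w tau s h).
have [x2 fx2] := f_surj (f q1 + cone_point sv w tau s (- h)).
have [] := cone_point_image svw (lt0r_neq0 D0) (etrans (hH h (erefl _)) (esym HE)).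
rewrite -fx1 => /preimage_cone_meet/[apply] -[t1 d1].
have [] := cone_point_image svw (lt0r_neq0 D0) (etrans (hH (- h) (sqrrN h)) (esym HE)).
rewrite -fx2 => /preimage_cone_meet/[apply] -[t2 d2].
have := simdist_cone_points fx1 fx2 (etrans t1 (esym t2)).
rewrite (_ : (h - - h) ^+ 2 = 4 * h ^+ 2); last by rewrite opprK expr2; ring.
rewrite -mulrA hH // => dist.
have := dot_sub_self_le (scomp x1) (scomp x2); rewrite -scompN -scompD dist d1 d2 /H.
by have := sqr_ge0 T; have := sqr_ge0 tau; lra.
Qed.

Lemma image_interval : 0 < dot sv sv -> T ^+ 2 = tau ^+ 2 - dot sv sv.
Proof.
move=> D0; set D := dot sv sv in D0 *.
have timelike : D < tau ^+ 2.
  rewrite lt_neqAle image_not_spacelike andbT; apply/eqP => Dtau.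
  apply/axis_not_lightlike/lightlike_sym/f_lightlike.
  by rewrite /lightlike mink_self -/tau -/sv -/D Dtau subrr.
have [w [svw w0]] := exists_orthogonal sv n2.
have h0 : 0 <= (tau ^+ 2 - D) / 4 / dot w w.
  by rewrite !divr_ge0 ?ler0n ?ltW // subr_gt0.
have [h [_ hh]] := euclidean_sqrt euclR h0.
have hH : h ^+ 2 * dot w w = 0 ^+ 2 * (1 - tau ^+ 2 / D) + (tau ^+ 2 - D) / 4.
  by rewrite expr2 hh mulfVK ?lt0r_neq0 // expr0n mul0r add0r.
have [x fx] := f_surj (f q1 + cone_point sv w tau 0 h).
have [] := cone_point_image svw (lt0r_neq0 D0) hH; rewrite -fx => fxq1 fxq2.
have [tx dx] := preimage_cone_meet fxq1 fxq2.
have nxq1 : x != q1 by apply: contraNneq q12 => xq; move: tx; rewrite xq; lra.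
have nxq2 : x != q2 by apply: contraNneq q12 => xq; move: tx; rewrite xq; lra.
have [xq1 xq2] : lightlike x q1 /\ lightlike x q2 by split; apply/f_lightlike.
have fy := reflection_through_midpoint xq1 xq2 nxq1 nxq2 axis_not_lightlike.
have fyE : f (q1 + q2 - x) = f q1 + cone_point sv w tau 0 (- h).
  rewrite fy fx image_q2 /cone_point.
  by apply/rowP => j; rewrite !mxE; case: (unlift _ _) => [i|]; rewrite ?mxE; field;
    rewrite ?lt0r_neq0.
have ty : tcomp x = tcomp (q1 + q2 - x) by rewrite !compE tx; lra.
have := simdist_cone_points fx fyE ty.
rewrite (_ : scomp (x - (q1 + q2 - x)) = 2 *: scomp x); last first.
  by rewrite !compE q1_axis q2_axis; row_ring.
rewrite dotZl dotZr dx (_ : (h - - h) ^+ 2 * dot w w = 4 * (h ^+ 2 * dot w w)); last by ring.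
by rewrite hH expr0n mul0r add0r !expr2; lra.
Qed.

End AxisInterval.

Lemma time_dilation q1 q2 : scomp q1 = 0 -> scomp q2 = 0 ->
  0 < dot (scomp (f q2 - f q1)) (scomp (f q2 - f q1)) ->
  `|tcomp q1 - tcomp q2| < `|tcomp (f q1) - tcomp (f q2)|.
Proof.
move=> q1_axis q2_axis D0.
have q12 : tcomp q1 != tcomp q2.
  apply: contraTneq D0 => tq; have -> : q2 = q1.
    apply/eqP; rewrite -subr_eq0; apply/eqP/point_eq0.
      by rewrite !compE tq subrr.
    by rewrite !compE q1_axis q2_axis subrr.
  rewrite subrr (_ : scomp 0 = 0) ?dot0r ?ltxx //.
  by apply/rowP => i; rewrite !mxE.
have := image_interval q1_axis q2_axis q12 D0; rewrite tcompD tcompN => e.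
rewrite -ltr_sqr ?qualifE ?normr_ge0 //= !real_normK ?num_real //.
by move: e D0; rewrite !expr2; lra.
Qed.

End LightConePreserving.

Section Worldview.
Variables (R : realFieldType) (n : nat) (B : Type) (IOb Ph : B -> Prop).
Variable W : B -> B -> point R n -> Prop.
Hypotheses (n1 : (1 <= n)%N) (euclR : Euclidean R) (axPh : AxPh0 IOb Ph W).

Lemma AxPh0_lightlike o p q : IOb o ->
  lightlike p q <-> exists b, Ph b /\ W o b p /\ W o b q.
Proof. by move=> io; rewrite -elen_lightlike //; exact: axPh. Qed.

Lemma AxPh0_Cd o p : IOb o -> Cd W o p.
Proof.
move=> io; have [b [_ [Wp _]]] := (AxPh0_lightlike p p io).1 (lightlike_refl p).
by exists b.
Qed.

Lemma inEv_ev o p : IOb o -> inEv W o (ev W o p).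
Proof. by move=> io; exists p; split=> //; exact: AxPh0_Cd. Qed.

Lemma AxPh0_ev_inj o : IOb o -> injective (ev W o).
Proof.
move=> io p q epq; apply: NNPP => npq.
have [r [pr nqr]] := lightlike_separates n1 (introN eqP npq).
have [b [phb [Wp Wr]]] := (AxPh0_lightlike p r io).1 pr.
apply: nqr; apply/(AxPh0_lightlike q r io); exists b; split=> //; split=> //.
by rewrite -[W o b q]/(ev W o q b) -epq.
Qed.

Lemma AxPh0_IsCrd o p : IOb o -> IsCrd W o (ev W o p) p.
Proof.
move=> io; split; first exact: AxPh0_Cd.
by split=> // q _ /(AxPh0_ev_inj io).
Qed.

Hypothesis axEv : AxEv IOb W.
Variables m k : B.
Hypotheses (iom : IOb m) (iok : IOb k).

Definition wview (z : point R n) : point R n :=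
  epsilon (inhabits 0) (fun p => ev W m p = ev W k z).

Lemma wview_ev z : ev W m (wview z) = ev W k z.
Proof.
apply: (epsilon_spec (inhabits 0) (fun p => ev W m p = ev W k z)).
by have /(axEv iok iom) [p [_ ?]] := inEv_ev z iok; exists p.
Qed.

Lemma wview_inj : injective wview.
Proof. by move=> z z' e; apply: (AxPh0_ev_inj iok); rewrite -!wview_ev e. Qed.

Lemma wview_surj p : exists z, wview z = p.
Proof.
have /(axEv iom iok) [z [_ ez]] := inEv_ev p iom.
by exists z; apply: (AxPh0_ev_inj iom); rewrite wview_ev.
Qed.

Lemma wview_lightlike z z' : lightlike (wview z) (wview z') <-> lightlike z z'.
Proof.
have Wmk b y : W m b (wview y) <-> W k b y.
  by rewrite -[W m b _]/(ev W m _ b) wview_ev.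
rewrite (AxPh0_lightlike _ _ iom) (AxPh0_lightlike _ _ iok).
by split=> -[b [phb [? ?]]]; exists b; split=> //; split; apply/Wmk.
Qed.

Lemma IsCrd_wview z p : IsCrd W m (ev W k z) p -> p = wview z.
Proof. by case=> _ [_ uniq]; apply/esym/uniq; [exact: AxPh0_Cd | exact: wview_ev]. Qed.

Hypothesis axSim : AxSimDist IOb W.

Lemma wview_simdist z z' :
  tcomp z = tcomp z' -> tcomp (wview z) = tcomp (wview z') ->
  dot (scomp (wview z - wview z')) (scomp (wview z - wview z')) =
  dot (scomp (z - z')) (scomp (z - z')).
Proof.
move=> tz tw.
have crd_k y : IsCrd W k (ev W m (wview y)) y by rewrite wview_ev; exact: AxPh0_IsCrd.
have := axSim iom iok (inEv_ev _ iom) (inEv_ev _ iom) (AxPh0_IsCrd _ iom)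
  (AxPh0_IsCrd _ iom) (crd_k z) (crd_k z') tw tz.
have [_ <-] := sdistP euclR (wview z) (wview z').
by have [_ <-] := sdistP euclR z z' => ->.
Qed.

Lemma wview_time_dilation q1 q2 : (2 <= n)%N -> scomp q1 = 0 -> scomp q2 = 0 ->
  0 < dot (scomp (wview q2 - wview q1)) (scomp (wview q2 - wview q1)) ->
  `|tcomp q1 - tcomp q2| < `|tcomp (wview q1) - tcomp (wview q2)|.
Proof. by move=> n2; apply: (time_dilation wview_inj wview_surj wview_lightlike n2 euclR wview_simdist). Qed.

End Worldview.

Unset Implicit Arguments. Set Strict Implicit.

Theorem mainTheorem2 (n : nat) (hn : (2 <= n)%N) (R : realFieldType) (B : Type)
  (Ob IOb Ph : B -> Prop) (W : B -> B -> point R n -> Prop) :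
  SpecRel Ob IOb Ph W ->
  forall (m k : B) (e1 e2 : B -> Prop),
    IOb m -> IOb k -> inEv W k e1 -> inEv W k e2 -> e1 k -> e2 k ->
    (exists p1 p2, IsCrd W m e1 p1 /\ IsCrd W m e2 p2 /\ sdist p1 p2 != 0) ->
    exists p1 p2 q1 q2,
      [/\ IsCrd W m e1 p1, IsCrd W m e2 p2, IsCrd W k e1 q1, IsCrd W k e2 q2
        & tdiff q1 q2 < tdiff p1 p2].
Proof.
move=> [[IOb_Ob _] [euclR [axSelf [axPh [axEv axSim]]]]] m k e1 e2 iom iok.
move=> [q1 [Cq1 <-]] [q2 [Cq2 <-]] kq1 kq2 [p1 [p2 [Cp1 [Cp2 d12]]]].
have n1 : (1 <= n)%N by apply: ltnW.
exists p1, p2, q1, q2; split=> //; try exact: (AxPh0_IsCrd n1 euclR axPh _ iok).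
have on_axis q : Cd W k q -> W k k q -> scomp q = 0.
  by move=> Cq; apply: (axSelf k (IOb_Ob k iok) q Cq).1.
have crd_m := IsCrd_wview euclR axPh axEv iom iok.
rewrite /tdiff (crd_m _ _ Cp1) (crd_m _ _ Cp2) in d12 *.
exact: (wview_time_dilation n1 euclR axPh axEv iom iok axSim hn
  (on_axis _ Cq1 kq1) (on_axis _ Cq2 kq2) (sdist_neq0 euclR d12)).
Qed.
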